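(* Let $n$ be an odd positive integer and let the parameter space be $\Theta=\{(\theta,\gamma_1,\dots,\gamma_n):\theta\in\{0,1\},\ \gamma_i\in[0,1]\ \forall i\}$. Conditionally on $(\theta,\boldsymbol\gamma)\in\Theta$, let $Y_1,\dots,Y_n\in\{0,1\}$ be independent with $\mathbb{P}(Y_i=1\mid\theta=1,\boldsymbol\gamma)=\mathbb{P}(Y_i=0\mid\theta=0,\boldsymbol\gamma)=\gamma_i$, and let $U\sim\mathrm{Bernoulli}(1/2)$ be independent of $\vec Y$. Decision rules are functions $\delta:\{0,1\}^n\times\{0,1\}\to\{0,1\}$ with loss $L(\theta,a)=\mathbb{I}(\theta\ne a)$ and risk $R(\delta,\xi)=\mathbb{E}[L(\theta,\delta(\vec Y,U))\mid\xi]$ for $\xi=(\theta,\boldsymbol\gamma)\in\Theta$. Then the coin flip rule $\delta^{cf}(\vec y,u)=u$ is minimax: $\sup_{\xi\in\Theta}R(\delta^{cf},\xi)=\inf_\delta\sup_{\xi\in\Theta}R(\delta,\xi)$. *)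

From HB Require Import structures.
From mathcomp Require Import all_boot all_order all_algebra.
From mathcomp Require Import boolp classical_sets reals.
Set Implicit Arguments. Unset Strict Implicit. Unset Printing Implicit Defensive.
Import Order.TTheory GRing.Theory Num.Theory.
Local Open Scope ring_scope.
Local Open Scope classical_set_scope.

Definition obs (n : nat) := {ffun 'I_n -> bool}.

Definition rule (n : nat) := obs n -> bool -> bool.

Definition in_Theta (R : realType) (n : nat) (gamma : 'I_n -> R) : Prop :=
  forall i, 0 <= gamma i <= 1.

Definition pY (R : realType) (theta yi : bool) (g : R) : R :=
  if yi == theta then g else 1 - g.

Definition pYvec (R : realType) (n : nat) (theta : bool) (gamma : 'I_n -> R)
  (y : obs n) : R := \prod_(i < n) pY theta (y i) (gamma i).

(* Risk R(delta, xi) = E[ I(theta <> delta(Y,U)) | xi ], U ~ Bernoulli(1/2) indep. of Y. *)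
Definition risk (R : realType) (n : nat) (delta : rule n) (theta : bool)
  (gamma : 'I_n -> R) : R :=
  \sum_(y : obs n) \sum_(u : bool)
     pYvec theta gamma y * (1 / 2) * (if theta != delta y u then 1 else 0).

Definition max_risk (R : realType) (n : nat) (delta : rule n) : R :=
  sup [set r : R | exists theta gamma, in_Theta gamma /\ r = risk delta theta gamma].

Definition coin_flip (n : nat) : rule n := fun _ u => u.

(** At the least favourable parameter [gamma_i = 1/2] the observations carry no
    information: [Y] has the same law under [theta = 0] and [theta = 1], so for
    every rule the two risks there add up to [1] and the larger is at least
    [1/2].  The coin flip has risk exactly [1/2] everywhere, hence attains this
    lower bound. *)
From HB Require Import structures.
From mathcomp Require Import all_boot all_order all_algebra.
From mathcomp Require Import boolp classical_sets reals.
Import Order.TTheory GRing.Theory Num.Theory.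
Local Open Scope ring_scope.
Local Open Scope classical_set_scope.

Lemma inf_eq_lbound (R : realType) (E : set R) (x : R) :
  E x -> lbound E x -> inf E = x.
Proof.
move=> Ex lbx; apply/eqP; rewrite eq_le; apply/andP; split.
  by apply: ge_inf => //; exists x.
by apply: lb_le_inf => //; exists x.
Qed.

Section ObservationLaw.

Variables (R : realType) (n : nat).
Implicit Types (theta : bool) (gamma : 'I_n -> R) (d : rule n).

Lemma pY_sum theta (g : R) : pY theta true g + pY theta false g = 1.
Proof. by rewrite /pY; case: theta => /=; rewrite ?subrK // addrC subrK. Qed.

Lemma sum_pYvec theta gamma : \sum_(y : obs n) pYvec theta gamma y = 1.
Proof.
rewrite /pYvec -(bigA_distr_bigA (fun i b => pY theta b (gamma i))) /=.
by apply: big1 => i _; rewrite big_bool; apply: pY_sum.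
Qed.

Lemma pYvec_ge0 theta gamma y : in_Theta gamma -> 0 <= pYvec theta gamma y.
Proof.
move=> hg; apply: prodr_ge0 => i _; have /andP[g0 g1] := hg i.
by rewrite /pY; case: eqP; rewrite ?subr_ge0.
Qed.

Lemma pYvec_half theta (y : obs n) :
  pYvec theta (fun => 1 / 2) y = pYvec (~~ theta) (fun => 1 / 2) y :> R.
Proof.
have half_compl : 1 - 1 / 2 = 1 / 2 :> R by rewrite {1}(splitr 1) addrK.
by apply: eq_bigr => i _; rewrite /pY; case: theta; case: (y i).
Qed.

Lemma risk_le1 d theta gamma : in_Theta gamma -> risk d theta gamma <= 1.
Proof.
move=> hg; rewrite /risk -[leRHS](sum_pYvec theta gamma); apply: ler_sum => y _.
have py0 := pYvec_ge0 theta gamma y hg.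
rewrite big_bool !mul1r [X in _ <= X](splitr (pYvec theta gamma y)).
by apply: lerD; case: ifP; rewrite ?mulr1 ?mulr0 ?divr_ge0.
Qed.

Lemma risk_coin_flip theta gamma : risk (@coin_flip n) theta gamma = 1 / 2.
Proof.
rewrite /risk /coin_flip -[RHS]mul1r -[X in _ = X * _](sum_pYvec theta gamma).
rewrite mulr_suml; apply: eq_bigr => y _; rewrite big_bool /=.
by case: theta; rewrite /= ?mulr1 ?mulr0 ?addr0 ?add0r.
Qed.

Lemma risk_half_sum d :
  risk d false (fun => 1 / 2) + risk d true (fun => 1 / 2) = 1 :> R.
Proof.
rewrite /risk -big_split -[RHS](sum_pYvec false (fun => 1 / 2)) /=.
apply: eq_bigr => y _; rewrite -big_split /= (pYvec_half true) big_bool /=.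
by case: (d y true); case: (d y false);
  rewrite /= ?mulr1 ?mulr0 ?addr0 ?add0r -mulrDr -splitr mulr1.
Qed.

End ObservationLaw.

Section MaxRisk.

Variables (R : realType) (n : nat).
Implicit Types (d : rule n).

Lemma in_Theta_cst {c : R} : 0 <= c <= 1 -> in_Theta (fun _ : 'I_n => c).
Proof. by move=> c01 i. Qed.

Lemma half_in_unit : 0 <= (1 / 2 : R) <= 1.
Proof. by rewrite divr_ge0 ?ler01 // ler_pdivrMr // mul1r ler1n. Qed.

Lemma risk_le_max_risk d theta gamma :
  in_Theta gamma -> risk d theta gamma <= max_risk R d.
Proof.
move=> hg; apply: sup_upper_bound; last by exists theta, gamma.
split; first by exists (risk d theta gamma), theta, gamma.
by exists 1 => _ [th [g [hg' ->]]]; apply: risk_le1.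
Qed.

Lemma max_risk_coin_flip : max_risk R (@coin_flip n) = 1 / 2.
Proof.
rewrite /max_risk.
have -> : [set r : R | exists theta gamma, in_Theta gamma /\
            r = risk (@coin_flip n) theta gamma] = [set 1 / 2].
  apply/seteqP; split => r /=; first by move=> [th [g [_ ->]]]; rewrite risk_coin_flip.
  move=> ->; exists false, (fun => 0); rewrite risk_coin_flip; split => //.
  by apply: in_Theta_cst; rewrite lexx ler01.
exact: sup1.
Qed.

Lemma max_risk_ge_half d : 1 / 2 <= max_risk R d.
Proof.
have hT := in_Theta_cst half_in_unit.
have r0 := risk_le_max_risk d false _ hT; have r1 := risk_le_max_risk d true _ hT.
rewrite ler_pdivrMr // mulr_natr mulr2n -(@risk_half_sum R n d).
exact: lerD.
Qed.

End MaxRisk.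

Theorem theorem7 (R : realType) (n : nat) (hn : odd n) :
  @max_risk R n (@coin_flip n) =
  inf [set s : R | exists delta : rule n, s = @max_risk R n delta].
Proof.
symmetry; apply: inf_eq_lbound; first by exists (@coin_flip n).
by move=> _ [d ->]; rewrite max_risk_coin_flip; apply: max_risk_ge_half.
Qed.
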